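(* Let $\dagger=\Omega_1\land\cdots\land\Omega_M$ be a $3$-SAT formula in CNF over Boolean variables $\sigma_1,\dots,\sigma_N$, each clause $\Omega_k=(\ell^k_1\lor\ell^k_2\lor\ell^k_3)$ consisting of exactly three literals over three distinct variables. Let $\ddagger$ be the Max $2$-SAT instance over $\sigma_1,\dots,\sigma_N,d^1,\dots,d^M$ consisting, for each $k$, of the block $\Omega'_k$ of $10$ clauses $$(\ell^k_1),(\ell^k_2),(\ell^k_3),(d^k),(\neg\ell^k_1\lor\neg\ell^k_2),(\neg\ell^k_1\lor\neg\ell^k_3),(\neg\ell^k_2\lor\neg\ell^k_3),(\ell^k_1\lor\neg d^k),(\ell^k_2\lor\neg d^k),(\ell^k_3\lor\neg d^k).$$ Suppose $\ddagger$ has been solved, yielding an assignment of all $N+M$ variables. For $a\in\{0,1\}$ let $I_a=\{k: d^k=a\}$, let $\mathfrak{S}_a$ be the number of satisfied clauses of $\ddagger$ lying in the blocks $\Omega'_k$, $k\in I_a$, and let $\mathcal{V}_a,\mathcal{S}_a$ be the numbers of $k\in I_a$ for which $\Omega_k$ is violated, respectively satisfied. Let $\mathcal{V}=\mathcal{V}_0+\mathcal{V}_1$ and $\mathcal{S}=\mathcal{S}_0+\mathcal{S}_1$ be the numbers of violated and satisfied clauses of $\dagger$. Then: (i) $(\mathcal{V}_0,\mathcal{S}_0)$ is the unique non-negative integer solution of $6\mathcal{V}_0+7\mathcal{S}_0=\mathfrak{S}_0$, $\mathcal{V}_0+\mathcal{S}_0=|I_0|$; (ii) (determination by enumeration) $(\mathcal{V}_1,\mathcal{S}_1)$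 lies in the finite set of pairs $(v,\,s_2+s_3)$ where $(s_2,s_3,v)$ ranges over the non-negative integer solutions of $\mathfrak{S}_1=6s_2+7s_3+4v$, $|I_1|=v+s_2+s_3$; consequently $(\mathcal{V},\mathcal{S})$ lies in a finite set of candidates computable from $\mathfrak{S}_0,\mathfrak{S}_1,|I_0|,|I_1|$; (iii) if in addition the number of Case 1 clauses (those $k$ with $\ell^k_1=\ell^k_2=\ell^k_3=0$) is known, then the exact values of $\mathcal{V}$ and $\mathcal{S}$ are retrieved.
   Context: Truth values are identified with $\{0,1\}$. ''Case 1'' refers to a clause $\Omega_k$ whose three literals are all false under the assignment. The variables $d^k$ are called ancillary variables. *)

From mathcomp Require Import all_boot.
Set Implicit Arguments. Unset Strict Implicit. Unset Printing Implicit Defensive.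

(* Variables of the Max 2-SAT instance: sigma_i (inl i) and d^k (inr k). *)
Definition var2 (N M : nat) := ('I_N + 'I_M)%type.

(* A literal is a pair (variable, polarity); polarity true = positive literal. *)
Definition lit_val {V : Type} (a : V -> bool) (l : V * bool) : bool :=
  if l.2 then a l.1 else ~~ a l.1.

Definition negl {V : Type} (l : V * bool) : V * bool := (l.1, ~~ l.2).

(* A 3-SAT formula with M clauses over N variables: clause k has literals
   F k 0, F k 1, F k 2. *)
Definition formula3 (N M : nat) := 'I_M -> 'I_3 -> 'I_N * bool.

Definition i0 : 'I_3 := @Ordinal 3 0 isT.
Definition i1 : 'I_3 := @Ordinal 3 1 isT.
Definition i2 : 'I_3 := @Ordinal 3 2 isT.

Definition liftl (N M : nat) (F : formula3 N M) (k : 'I_M) (i : 'I_3)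
  : var2 N M * bool := (inl (F k i).1, (F k i).2).

Definition dlit (N M : nat) (k : 'I_M) : var2 N M * bool := (inr k, true).

Definition block (N M : nat) (F : formula3 N M) (k : 'I_M)
  : seq (seq (var2 N M * bool)) :=
  let l1 := liftl F k i0 in let l2 := liftl F k i1 in let l3 := liftl F k i2 in
  let d := @dlit N M k in
  [:: [:: l1]; [:: l2]; [:: l3]; [:: d];
      [:: negl l1; negl l2]; [:: negl l1; negl l3]; [:: negl l2; negl l3];
      [:: l1; negl d]; [:: l2; negl d]; [:: l3; negl d]].

Definition ddagger (N M : nat) (F : formula3 N M) : seq (seq (var2 N M * bool)) :=
  flatten [seq block F k | k <- enum 'I_M].

Definition clause_sat {V : Type} (a : V -> bool) (c : seq (V * bool)) : bool :=
  has (lit_val a) c.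

Definition nsat {V : Type} (a : V -> bool) (inst : seq (seq (V * bool))) : nat :=
  count (clause_sat a) inst.

Definition optimal (N M : nat) (F : formula3 N M) (a : var2 N M -> bool) : Prop :=
  forall a' : var2 N M -> bool, nsat a' (ddagger F) <= nsat a (ddagger F).

Definition sat3 (N M : nat) (F : formula3 N M) (a : var2 N M -> bool) (k : 'I_M) : bool :=
  [exists i : 'I_3, lit_val a (liftl F k i)].

Definition Iset (N M : nat) (a : var2 N M -> bool) (b : bool) : {set 'I_M} :=
  [set k : 'I_M | a (inr k) == b].

Definition frakS (N M : nat) (F : formula3 N M) (a : var2 N M -> bool) (b : bool) : nat :=
  \sum_(k in Iset a b) nsat a (block F k).

Definition Vb (N M : nat) (F : formula3 N M) (a : var2 N M -> bool) (b : bool) : nat :=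
  #|[set k in Iset a b | ~~ sat3 F a k]|.
Definition Sb (N M : nat) (F : formula3 N M) (a : var2 N M -> bool) (b : bool) : nat :=
  #|[set k in Iset a b | sat3 F a k]|.

Definition Vtot (N M : nat) (F : formula3 N M) (a : var2 N M -> bool) : nat :=
  #|[set k : 'I_M | ~~ sat3 F a k]|.
Definition Stot (N M : nat) (F : formula3 N M) (a : var2 N M -> bool) : nat :=
  #|[set k : 'I_M | sat3 F a k]|.

Definition case1 (N M : nat) (F : formula3 N M) (a : var2 N M -> bool) : nat :=
  #|[set k : 'I_M | [forall i : 'I_3, lit_val a (liftl F k i) == false]]|.

Definition cand0 (S0 n0 : nat) : seq (nat * nat) :=
  [seq p <- [seq (v, s) | v <- iota 0 n0.+1, s <- iota 0 n0.+1]
     | (6 * p.1 + 7 * p.2 == S0) && (p.1 + p.2 == n0)].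

Definition cand1 (S1 n1 : nat) : seq (nat * nat) :=
  [seq (t.1.1, t.1.2 + t.2) |
     t <- [seq t <- flatten [seq [seq ((v, s2), s3) | s2 <- iota 0 n1.+1, s3 <- iota 0 n1.+1]
                               | v <- iota 0 n1.+1]
          | (S1 == 6 * t.1.2 + 7 * t.2 + 4 * t.1.1) && (n1 == t.1.1 + t.1.2 + t.2)]].

Definition candidates (S0 S1 n0 n1 : nat) : seq (nat * nat) :=
  [seq (p.1 + q.1, p.2 + q.2) | p <- cand0 S0 n0, q <- cand1 S1 n1].

From mathcomp Require Import all_boot zify.

Set Implicit Arguments.
Unset Strict Implicit.
Unset Printing Implicit Defensive.

(* The number of satisfied clauses of a block Omega'_k depends only on the
   values of l^k_1, l^k_2, l^k_3 and d^k, and flipping d^k changes no other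
   block.  A table of the 16 cases shows that when flipping d^k gains nothing,
   the block scores 7 if d^k = 1 (and then Omega_k is satisfied), and 7 or 6
   if d^k = 0 according to whether Omega_k is satisfied or not.  Hence an
   optimal solution has V_1 = 0, frakS_0 = 6 V_0 + 7 S_0 and
   frakS_1 = 7 S_1; the rest is counting, the violated clauses of dagger
   being exactly the Case 1 clauses. *)

Lemma card_sep_split {T : finType} (A : {set T}) (P : pred T) :
  #|[set k in A | P k]| + #|[set k in A | ~~ P k]| = #|A|.
Proof.
rewrite -(cardsID [set k | P k] A); congr (_ + _); apply: eq_card => k;
  by rewrite !inE andbC.
Qed.

Lemma sum_sep_const {T : finType} (A : {set T}) (P : pred T) (f : T -> nat)
    (x y : nat) :
  {in A, forall k, f k = if P k then x else y} ->
  \sum_(k in A) f k = x * #|[set k in A | P k]| + y * #|[set k in A | ~~ P k]|.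
Proof.
move=> fE; rewrite (bigID P) /= [x * _]mulnC [y * _]mulnC -!sum_nat_cond_const.
congr (_ + _); apply: eq_big => k; rewrite ?inE // => /andP[kA Pk];
  by rewrite fE // ?(negbTE Pk) ?Pk.
Qed.

Lemma mem_cand0 (S0 n0 v s : nat) :
  6 * v + 7 * s = S0 -> v + s = n0 -> (v, s) \in cand0 S0 n0.
Proof.
move=> eqS eqn; rewrite mem_filter; apply/andP; split; first by rewrite eqS eqn !eqxx.
by apply: allpairs_f; rewrite mem_iota; lia.
Qed.

Lemma mem_cand1 (S1 n1 v s2 s3 : nat) :
  S1 = 6 * s2 + 7 * s3 + 4 * v -> n1 = v + s2 + s3 ->
  (v, s2 + s3) \in cand1 S1 n1.
Proof.
move=> eqS eqn; apply: (map_f (fun t => (t.1.1, t.1.2 + t.2)) (x := (v, s2, s3))).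
rewrite mem_filter; apply/andP; split; first by rewrite eqS eqn !eqxx.
apply/flatten_mapP.
exists v; first by rewrite mem_iota; lia.
by apply: (allpairs_f (fun s2 s3 => (v, s2, s3))); rewrite mem_iota; lia.
Qed.

Lemma mem_candidates (S0 S1 n0 n1 : nat) (p q : nat * nat) :
  p \in cand0 S0 n0 -> q \in cand1 S1 n1 ->
  (p.1 + q.1, p.2 + q.2) \in candidates S0 S1 n0 n1.
Proof. exact: allpairs_f. Qed.

Definition flip {V : eqType} (a : V -> bool) (x : V) : V -> bool :=
  fun v => if v == x then ~~ a v else a v.

Lemma lit_val_negl {V : Type} (a : V -> bool) (l : V * bool) :
  lit_val a (negl l) = ~~ lit_val a l.
Proof. by rewrite /lit_val /negl; case: l.2; rewrite ?negbK. Qed.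

Definition block_score (x1 x2 x3 d : bool) : nat :=
  x1 + x2 + x3 + d + (~~ x1 || ~~ x2) + (~~ x1 || ~~ x3) + (~~ x2 || ~~ x3)
  + (x1 || ~~ d) + (x2 || ~~ d) + (x3 || ~~ d).

Lemma block_score_stable x1 x2 x3 d :
  block_score x1 x2 x3 (~~ d) <= block_score x1 x2 x3 d ->
  if d then block_score x1 x2 x3 d = 7 /\ [|| x1, x2 | x3]
  else block_score x1 x2 x3 d = (if [|| x1, x2 | x3] then 7 else 6).
Proof. by move: x1 x2 x3 d; do 4! case. Qed.

Section Reduction.

Variables (N M : nat) (F : formula3 N M).

Lemma nsat_block (a : var2 N M -> bool) (k : 'I_M) :
  nsat a (block F k) =
  block_score (lit_val a (liftl F k i0)) (lit_val a (liftl F k i1))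
              (lit_val a (liftl F k i2)) (a (inr k)).
Proof.
rewrite /nsat /block /clause_sat /= !lit_val_negl !orbF.
rewrite (_ : lit_val a (dlit N k) = a (inr k)) //.
move: (lit_val a (liftl F k i0)) (lit_val a (liftl F k i1))
      (lit_val a (liftl F k i2)) (a (inr k)).
by do 4! case.
Qed.

Lemma nsat_ddagger (a : var2 N M -> bool) :
  nsat a (ddagger F) = \sum_(k < M) nsat a (block F k).
Proof. by rewrite /nsat /ddagger count_flatten sumnE !big_map. Qed.

Lemma nsat_block_flip (a : var2 N M -> bool) (j k : 'I_M) :
  nsat (flip a (inr k)) (block F j) =
  block_score (lit_val a (liftl F j i0)) (lit_val a (liftl F j i1))
              (lit_val a (liftl F j i2)) (if j == k then ~~ a (inr j) else a (inr j)).
Proof. by rewrite nsat_block /flip (inj_eq inr_inj). Qed.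

Lemma optimal_block_score (a : var2 N M -> bool) (k : 'I_M) : optimal F a ->
  block_score (lit_val a (liftl F k i0)) (lit_val a (liftl F k i1))
              (lit_val a (liftl F k i2)) (~~ a (inr k))
  <= nsat a (block F k).
Proof.
move/(_ (flip a (inr k))); rewrite !nsat_ddagger (bigD1 k) // [X in _ <= X](bigD1 k) //.
have -> : \sum_(j < M | j != k) nsat (flip a (inr k)) (block F j) =
          \sum_(j < M | j != k) nsat a (block F j).
  by apply: eq_bigr => j /negbTE jk; rewrite nsat_block_flip jk -nsat_block.
by rewrite leq_add2r nsat_block_flip eqxx.
Qed.

Lemma sat3E (a : var2 N M -> bool) (k : 'I_M) :
  sat3 F a k = [|| lit_val a (liftl F k i0), lit_val a (liftl F k i1)
                 | lit_val a (liftl F k i2)].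
Proof.
apply/existsP/idP => [[[[|[|[|//]]] lti] lit_true] | /or3P[]]; last 3 first.
- by exists i0.
- by exists i1.
- by exists i2.
- by rewrite (_ : i0 = Ordinal lti) ?lit_true //; apply: val_inj.
- by rewrite (_ : i1 = Ordinal lti) ?lit_true ?orbT //; apply: val_inj.
- by rewrite (_ : i2 = Ordinal lti) ?lit_true ?orbT //; apply: val_inj.
Qed.

Lemma card_Iset (a : var2 N M -> bool) (b : bool) :
  Vb F a b + Sb F a b = #|Iset a b|.
Proof. by rewrite addnC card_sep_split. Qed.

Lemma card_Iset_split (a : var2 N M -> bool) (P : pred 'I_M) :
  #|[set k | P k]| =
  #|[set k in Iset a false | P k]| + #|[set k in Iset a true | P k]|.
Proof.
rewrite -(card_sep_split [set k | P k] (fun k => a (inr k) == false)).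
by congr (_ + _); apply: eq_card => k; rewrite !inE; case: (a (inr k)); rewrite andbC.
Qed.

Lemma Vtot_case1 (a : var2 N M -> bool) : Vtot F a = case1 F a.
Proof.
apply: eq_card => k; rewrite !inE /sat3 negb_exists.
by apply: eq_forallb => i; case: (lit_val _ _).
Qed.

Variable a : var2 N M -> bool.
Hypothesis a_opt : optimal F a.

Lemma nsat_block_optimal (k : 'I_M) :
  if a (inr k) then nsat a (block F k) = 7 /\ sat3 F a k
  else nsat a (block F k) = (if sat3 F a k then 7 else 6).
Proof.
rewrite sat3E nsat_block; apply: block_score_stable.
by rewrite -nsat_block; apply: optimal_block_score.
Qed.

Lemma Vb_true : Vb F a true = 0.
Proof.
apply/eqP; rewrite cards_eq0; apply/eqP/setP => k; rewrite !inE.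
by have := nsat_block_optimal k; case: (a (inr k)) => // -[_ ->].
Qed.

Lemma frakS_false : frakS F a false = 7 * Sb F a false + 6 * Vb F a false.
Proof.
apply: sum_sep_const => k; rewrite inE => /eqP ak.
by have := nsat_block_optimal k; rewrite ak.
Qed.

Lemma frakS_true : frakS F a true = 7 * Sb F a true.
Proof.
rewrite /frakS (@sum_sep_const _ _ (sat3 F a) _ 7 7) -/(Vb F a true) ?Vb_true ?addn0 //.
move=> k; rewrite inE => /eqP ak.
by have := nsat_block_optimal k; rewrite ak => -[-> ->].
Qed.

End Reduction.

Theorem theorem2 (N M : nat) (F : 'I_M -> 'I_3 -> 'I_N * bool)
  (Hdistinct : forall k : 'I_M, injective (fun i : 'I_3 => (F k i).1))
  (a : 'I_N + 'I_M -> bool)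
  (Hopt : optimal F a) :
  [/\ (* (i) *)
      [/\ 6 * Vb F a false + 7 * Sb F a false = frakS F a false,
          Vb F a false + Sb F a false = #|Iset a false|
        & forall v s : nat, 6 * v + 7 * s = frakS F a false ->
            v + s = #|Iset a false| -> v = Vb F a false /\ s = Sb F a false],
      (* (ii) *)
      exists s2 s3 v : nat,
        [/\ frakS F a true = 6 * s2 + 7 * s3 + 4 * v,
            #|Iset a true| = v + s2 + s3,
            Vb F a true = v & Sb F a true = s2 + s3],
      (* V = V_0 + V_1, S = S_0 + S_1, and (V, S) lies in the computable candidate set *)
      [/\ Vtot F a = Vb F a false + Vb F a true,
          Stot F a = Sb F a false + Sb F a true
        & (Vtot F a, Stot F a) \in candidates (frakS F a false) (frakS F a true)
                                     #|Iset a false| #|Iset a true| ]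
    & (* (iii) *)
      Vtot F a = case1 F a /\
      Stot F a = #|Iset a false| + #|Iset a true| - case1 F a].
Proof.
have V1 := Vb_true Hopt; have S0 := frakS_false Hopt; have S1 := frakS_true Hopt.
have C0 := card_Iset F a false; have C1 := card_Iset F a true.
have Vt : Vtot F a = Vb F a false + Vb F a true by apply: card_Iset_split.
have St : Stot F a = Sb F a false + Sb F a true by apply: card_Iset_split.
split.
- by split=> [||v s]; rewrite ?S0 -?C0 //; lia.
- by exists 0, (Sb F a true), (Vb F a true); split; rewrite ?S1 -?C1 ?V1 //; lia.
- have in0 : (Vb F a false, Sb F a false) \in cand0 (frakS F a false) #|Iset a false|.
    by apply: mem_cand0; rewrite ?S0 -?C0 //; lia.
  have in1 : (Vb F a true, 0 + Sb F a true) \in cand1 (frakS F a true) #|Iset a true|.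
    by apply: mem_cand1; rewrite ?S1 -?C1 ?V1 //; lia.
  by split=> //; rewrite Vt St; apply: mem_candidates in0 in1.
- by rewrite -Vtot_case1 -C0 -C1 Vt St V1; split=> //; lia.
Qed.
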